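(* Let $p$ be an odd prime, $r,m$ positive integers and $s\in\{0,1,\dots,mp^{r-1}-1\}$. Then $$\binom{2sp+p-1}{sp+\frac{p-1}{2}}\binom{2(mp^{r-1}-s-1)p+p-1}{(mp^{r-1}-s-1)p+\frac{p-1}{2}}\equiv\binom{2s}{s}\binom{2(mp^{r-1}-s-1)}{mp^{r-1}-s-1}\pmod{p^r}.$$ *)

From mathcomp Require Import all_boot.

From mathcomp Require Import all_boot all_algebra.
From mathcomp Require Import ring zify.
Set Implicit Arguments. Unset Strict Implicit.
Import GRing.Theory.

(* Write N! = p^(N/p) (N/p)! u(N), where u(N) is the product of the integers
   in [1, N] not divisible by p.  For p = 2k+1 this turns
   C(2ap+2k, ap+k) u(ap+k)^2 into C(2a, a) u(2ap+2k), so, u being prime to p,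
   it suffices to show u(2sp+2k) u(2bp+2k) = (u(sp+k) u(bp+k))^2 modulo p^r,
   where b = mp^(r-1) - s - 1 and M = (s+b+1)p is divisible by p^r.  Modulo M
   the factors of u(M) above x are, up to sign, those of u(y) when
   x + y + 1 = M (pair j with M - j); this gives u(2M) = u(M)^2 and expresses
   both sides of the congruence through u(M) and u(2M), the signs being
   squares. *)

Section PFreeFactorial.
Variable p : nat.

Definition pfree_fact N := \prod_(0 <= i < N.+1) (if p %| i then 1 else i).

Lemma pfree_fact0 : pfree_fact 0 = 1.
Proof. by rewrite /pfree_fact big_nat1 dvdn0. Qed.

Lemma pfree_factS N :
  pfree_fact N.+1 = pfree_fact N * (if p %| N.+1 then 1 else N.+1).
Proof. by rewrite /pfree_fact big_nat_recr. Qed.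

Lemma coprime_pfree_fact N : prime p -> coprime p (pfree_fact N).
Proof.
move=> p_pr; apply: (big_ind (coprime p)) => [|x y cpx cpy|i _].
- exact: coprimen1.
- by rewrite coprimeMr cpx cpy.
by case: ifPn => [_|p'i]; rewrite ?coprimen1 ?prime_coprime.
Qed.

Hypothesis p_gt0 : 0 < p.

Lemma fact_pfree N : N`! = p ^ (N %/ p) * (N %/ p)`! * pfree_fact N.
Proof.
elim: N => [|N IHN]; first by rewrite div0n pfree_fact0.
rewrite factS IHN pfree_factS divnS //; case: ifP => [pN1|_]; last by ring.
have -> : N.+1 = (N %/ p).+1 * p by rewrite -[N.+1](divnK pN1) divnS // pN1.
by rewrite factS expnS; ring.
Qed.

Lemma divnMDl_small a k : k < p -> (a * p + k) %/ p = a.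
Proof. by move=> lt_kp; rewrite divnMDl // divn_small // addn0. Qed.

Lemma bin_pfree_fact a k : 2 * k < p ->
  'C(2 * a * p + 2 * k, a * p + k) * pfree_fact (a * p + k) ^ 2
  = 'C(2 * a, a) * pfree_fact (2 * a * p + 2 * k).
Proof.
move=> lt_2kp.
have /bin_fact binE : a * p + k <= 2 * a * p + 2 * k by lia.
have /bin_fact binE' : a <= 2 * a by lia.
rewrite (_ : 2 * a * p + 2 * k - (a * p + k) = a * p + k) in binE; last by lia.
rewrite (_ : 2 * a - a = a) in binE'; last by lia.
rewrite (fact_pfree (a * p + k)) (fact_pfree (2 * a * p + 2 * k)) in binE.
rewrite !divnMDl_small // in binE; last by lia.
have pos : 0 < p ^ (2 * a) * (a`! * a`!).
  by rewrite muln_gt0 expn_gt0 p_gt0 !muln_gt0 !fact_gt0.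
apply/eqP; rewrite -(eqn_pmul2l pos); apply/eqP.
transitivity ('C(2 * a * p + 2 * k, a * p + k) *
      ((p ^ a * a`! * pfree_fact (a * p + k)) * (p ^ a * a`! * pfree_fact (a * p + k)))).
  by rewrite mul2n -addnn expnD; ring.
by rewrite binE -binE'; ring.
Qed.

End PFreeFactorial.

Lemma eqn_modMr_coprime q c a b :
  coprime q c -> (a * c == b * c %[mod q]) = (a == b %[mod q]).
Proof.
move=> cop_qc; wlog le_ba : a b / b <= a => [wlogH|].
  by case/orP: (leq_total b a) => /wlogH //; rewrite eq_sym [RHS]eq_sym.
by rewrite !eqn_mod_dvd ?leq_mul2r ?le_ba ?orbT // -mulnBl Gauss_dvdl.
Qed.

Section ModularReflection.
Variables p q : nat.
Hypothesis q_gt1 : 1 < q.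

Definition opp_pfree_fact d : 'Z_q :=
  (\prod_(0 <= j < d.+1) (if (p %| j)%N then 1 else - j%:R))%R.

Lemma natrZp_eq0 M : q %| M -> (M%:R = 0 :> 'Z_q)%R.
Proof. by move=> /divnK <-; rewrite natrM pchar_Zp // mulr0. Qed.

Lemma natrZp_eq_mod m n : (m%:R = n%:R :> 'Z_q)%R -> m = n %[mod q].
Proof. by move/(congr1 val); rewrite /= !val_Zp_nat. Qed.

Lemma opp_pfree_factE N : 0 < p ->
  opp_pfree_fact N = ((-1) ^+ (N - N %/ p) * (pfree_fact p N)%:R)%R.
Proof.
move=> p_gt0; elim: N => [|N IHN].
  by rewrite div0n /opp_pfree_fact big_nat1 dvdn0 pfree_fact0 mulr1.
rewrite /opp_pfree_fact big_nat_recr //= -/(opp_pfree_fact N) IHN.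
rewrite pfree_factS natrM divnS //; case: ifP => _ /=.
  by rewrite add1n subSS !mulr1.
by rewrite add0n subSn ?leq_div // exprS; ring.
Qed.

(* Modulo [q], [x + i = - (y.+1 - i)], and [p] divides one iff it divides the
   other. *)
Lemma pfree_fact_reflect x y : p %| (x + y).+1 -> q %| (x + y).+1 ->
  ((pfree_fact p x)%:R * opp_pfree_fact y = (pfree_fact p (x + y).+1)%:R)%R.
Proof.
elim: y x => [|y IHy] x pM qM.
  rewrite addn0 in pM *.
  by rewrite /opp_pfree_fact big_nat1 dvdn0 mulr1 pfree_factS pM muln1.
rewrite /opp_pfree_fact big_nat_recr //= -/(opp_pfree_fact y).
rewrite -addSnnS in pM qM *; rewrite -(IHy x.+1) // pfree_factS natrM.
have sum_xy : (x.+1 + y).+1 = x.+1 + y.+1 by rewrite addnS.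
have -> : (p %| y.+1) = (p %| x.+1).
  by apply/idP/idP => pdiv; rewrite -(dvdn_addr _ pdiv) ?[y.+1 + _]addnC -sum_xy.
case: ifP => _; first by rewrite !mulr1 mulrC.
have -> : (- y.+1%:R = x.+1%:R :> 'Z_q)%R.
  by apply/eqP; rewrite eq_sym -subr_eq0 opprK -natrD -sum_xy natrZp_eq0.
by rewrite mulrA mulrAC.
Qed.

Lemma pfree_fact_double M : 0 < M -> p %| M -> q %| M ->
  ((pfree_fact p (2 * M))%:R = (pfree_fact p M)%:R ^+ 2 :> 'Z_q)%R.
Proof.
case: M => // c _ pM qM.
have oppE : opp_pfree_fact c = (pfree_fact p c.+1)%:R%R.
  by rewrite -(@pfree_fact_reflect 0) ?add0n // pfree_fact0 mul1r.
have dbl : 2 * c.+1 = (c.+1 + c).+1 by lia.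
by rewrite dbl -pfree_fact_reflect -?dbl ?dvdn_mull // oppE expr2.
Qed.

Lemma pfree_fact_central_mod a b k : p = (2 * k).+1 -> q %| (a + b + 1) * p ->
  pfree_fact p (2 * a * p + 2 * k) * pfree_fact p (2 * b * p + 2 * k)
  = (pfree_fact p (a * p + k) * pfree_fact p (b * p + k)) ^ 2 %[mod q].
Proof.
move=> p_eq qM; set M := (a + b + 1) * p in qM.
have p_gt0 : 0 < p by rewrite p_eq.
have lt_2kp : 2 * k < p by rewrite p_eq.
have lt_kp : k < p by lia.
have pM : p %| M by apply: dvdn_mull.
have M_gt0 : 0 < M by rewrite muln_gt0 addn1 p_gt0.
have eM : M = (a * p + k + (b * p + k)).+1.
  by rewrite /M !mulnDl mul1n {3}p_eq; lia.
have e2M : 2 * M = ((2 * a * p + 2 * k).+1 + (2 * b * p + 2 * k)).+1.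
  by rewrite eM; lia.
have pfree_odd :
    pfree_fact p (2 * a * p + 2 * k).+1 = pfree_fact p (2 * a * p + 2 * k).
  rewrite pfree_factS (_ : p %| _) ?muln1 //.
  by rewrite (_ : _.+1 = (2 * a).+1 * p) ?dvdn_mull // p_eq; lia.
have opp_even :
    opp_pfree_fact (2 * b * p + 2 * k) = (pfree_fact p (2 * b * p + 2 * k))%:R%R.
  have even_exp : 2 * b * p + 2 * k - 2 * b = 2 * (b * p + k - b) by lia.
  by rewrite opp_pfree_factE // divnMDl_small // even_exp exprM exprAC sqrr_sign mul1r.
have opp_half : opp_pfree_fact (b * p + k)
                = ((-1) ^+ (b * p + k - b) * (pfree_fact p (b * p + k))%:R)%R.
  by rewrite opp_pfree_factE // divnMDl_small.
apply: natrZp_eq_mod; rewrite natrX !natrM -opp_even -pfree_odd.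
rewrite pfree_fact_reflect -e2M ?(dvdn_mull 2 pM) ?(dvdn_mull 2 qM) //.
rewrite pfree_fact_double //.
by rewrite eM -pfree_fact_reflect -?eM // opp_half mulrCA exprMn sqrr_sign mul1r.
Qed.
End ModularReflection.

Theorem lemma2p13 (p r m s : nat) :
  prime p -> odd p -> 0 < r -> 0 < m -> s < m * p ^ (r - 1) ->
  'C(2 * s * p + p - 1, s * p + (p - 1) %/ 2) *
  'C(2 * (m * p ^ (r - 1) - s - 1) * p + p - 1,
     (m * p ^ (r - 1) - s - 1) * p + (p - 1) %/ 2)
  = 'C(2 * s, s) * 'C(2 * (m * p ^ (r - 1) - s - 1), m * p ^ (r - 1) - s - 1)
    %[mod p ^ r].
Proof.
move=> p_pr p_odd r_gt0 _ lt_s_n.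
set n := m * p ^ (r - 1) in lt_s_n *; set b := n - s - 1; set k := (p - 1) %/ 2.
have p_eq : p = (2 * k).+1.
  by rewrite /k -[in LHS](odd_double_half p) p_odd -divn2 -mul2n; lia.
have lt_2kp : 2 * k < p by rewrite [X in _ < X]p_eq.
have q_gt1 : 1 < p ^ r by rewrite -(expn0 p) ltn_exp2l ?prime_gt1.
have n_eq : s + b + 1 = n by rewrite /b; lia.
have q_dvd : p ^ r %| (s + b + 1) * p.
  by rewrite n_eq /n -mulnA -expnSr subn1 prednK // dvdn_mull.
rewrite (_ : 2 * s * p + p - 1 = 2 * s * p + 2 * k); last by lia.
rewrite (_ : 2 * b * p + p - 1 = 2 * b * p + 2 * k); last by lia.
set V := (pfree_fact p (s * p + k) * pfree_fact p (b * p + k)) ^ 2.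
have cop_V : coprime (p ^ r) V.
  by rewrite coprimeXl // coprimeXr // coprimeMr !coprime_pfree_fact.
apply/eqP; rewrite -(eqn_modMr_coprime _ _ cop_V) /V expnMn mulnACA.
rewrite !bin_pfree_fact ?prime_gt0 // mulnACA -modnMmr.
by rewrite (pfree_fact_central_mod q_gt1 p_eq) // modnMmr expnMn.
Qed.
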